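(* Let $K\ge 1$ be an integer, let $\underline{A}\in\mathbb{R}^{K\times K}$ be a symmetric, negative definite, $m$-banded matrix, and let $\underline{P}=[p_{i,j}]\in\mathbb{R}^{K\times K}$. Let $a=\lambda_{\min}(\underline{A})<0$, $b=\lambda_{\max}(\underline{A})<0$, $\kappa=a/b$, and set $m_1=Km$, $$\tau_1=\frac{1}{2|b|}\max\Big\{1,\frac{(1+\sqrt{\kappa})^2}{2\kappa}\Big\},\qquad \rho_1=\Big(\frac{\sqrt{\kappa}-1}{\sqrt{\kappa}+1}\Big)^{2/m_1}.$$ For $i,j\in\{1,\dots,K\}$ let $\underline{X}_{i,j}\in\mathbb{R}^{K\times K}$ be the unique solution of $\underline{A}\underline{X}_{i,j}+\underline{X}_{i,j}\underline{A}=\mathbf{q}_i p_{i,j}\mathbf{q}_j^T$, let $\overline{\mathbf{x}}_{i,j}=\mathrm{vec}(\underline{X}_{i,j})$ and denote its $s$-th entry ($s=1,\dots,K^2$) by $\overline{x}^{i,j}_s$. Let $\phi(i,j)=(j-1)K+i$. Then for all $i,j,s$, $$|\overline{x}^{i,j}_s|\le |p_{i,j}|\,\tau_1\,\rho_1^{|\phi(i,j)-s|}.$$ Moreover, if $\underline{X}$ is the unique solution of $\underline{A}\underline{X}+\underline{X}\underline{A}=\underline{P}$ and $\overline{x}_s$ denotes the $s$-th entry of $\mathrm{vec}(\underline{X})$, then $$|\overline{x}_s|\le \tau_1\sum_{i=1}^{K}\sum_{j=1}^{K}|p_{i,j}|\,\rho_1^{|\phi(i,j)-s|}\quad\text{for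 all } s=1,\dots,K^2.$$
   Context: A $K\times K$ matrix $Z=[z_{i,j}]$ is called $s$-banded (bandwidth $s$, $s$ an even positive integer) if $z_{i,j}=0$ whenever $|i-j|>s/2$. $\mathbf{q}_j\in\mathbb{R}^K$ denotes the $j$-th standard basis vector (all zeros except a $1$ in position $j$). $\mathrm{vec}(\cdot)$ is the standard column-stacking operator. $\lambda_{\min},\lambda_{\max}$ denote the minimal and maximal eigenvalues. *)

(* real analysis (sqrt, real powers) needed; matrices are
   functions nat -> nat -> R, only entries with indices < K are relevant
   (0-based indexing). *)
From Stdlib Require Import Reals.
Open Scope R_scope.

Fixpoint rsum (n : nat) (f : nat -> R) : R :=
  match n with
  | O => 0
  | S k => rsum k f + f k
  end.

Definition mat := nat -> nat -> R.
Definition vect := nat -> R.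

Definition mvmul (K : nat) (A : mat) (v : vect) (i : nat) : R :=
  rsum K (fun k => A i k * v k).

Definition mmul (K : nat) (A B : mat) (i j : nat) : R :=
  rsum K (fun k => A i k * B k j).

Definition nonzero_vect (K : nat) (v : vect) : Prop :=
  exists i, (i < K)%nat /\ v i <> 0.

Definition symmetric (K : nat) (A : mat) : Prop :=
  forall i j, (i < K)%nat -> (j < K)%nat -> A i j = A j i.

Definition neg_definite (K : nat) (A : mat) : Prop :=
  forall v, nonzero_vect K v -> rsum K (fun i => v i * mvmul K A v i) < 0.

Definition banded (K : nat) (s : nat) (A : mat) : Prop :=
  forall i j, (i < K)%nat -> (j < K)%nat ->
    Rabs (INR i - INR j) > INR s / 2 -> A i j = 0.

Definition is_eigenvalue (K : nat) (A : mat) (l : R) : Prop :=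
  exists v, nonzero_vect K v /\
    forall i, (i < K)%nat -> mvmul K A v i = l * v i.

Definition is_lambda_min (K : nat) (A : mat) (a : R) : Prop :=
  is_eigenvalue K A a /\ forall l, is_eigenvalue K A l -> a <= l.

Definition is_lambda_max (K : nat) (A : mat) (b : R) : Prop :=
  is_eigenvalue K A b /\ forall l, is_eigenvalue K A l -> l <= b.

Definition solves_lyap (K : nat) (A X C : mat) : Prop :=
  forall r c, (r < K)%nat -> (c < K)%nat ->
    mmul K A X r c + mmul K X A r c = C r c.

Definition elem_rhs (i j : nat) (p : R) : mat :=
  fun r c => if andb (Nat.eqb r i) (Nat.eqb c j) then p else 0.

(* 0-based vec: entry s of vec(X) is X (s mod K) (s / K) *)
Definition vec_entry (K : nat) (X : mat) (s : nat) : R :=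
  X (Nat.modulo s K) (Nat.div s K).

(* 0-based phi(i,j) = j*K + i  (1-based: (j-1)K + i) *)
Definition phi (K i j : nat) : nat := (j * K + i)%nat.

Definition natdist (x y : nat) : nat := ((x - y) + (y - x))%nat.

Definition kappa (a b : R) : R := a / b.

Definition tau1 (a b : R) : R :=
  / (2 * Rabs b) * Rmax 1 ((1 + sqrt (kappa a b)) ^ 2 / (2 * kappa a b)).

Definition rho_base (a b : R) : R :=
  (sqrt (kappa a b) - 1) / (sqrt (kappa a b) + 1).

(* rho1 = base^(2/m1); the case base = 0 gives 0 (Rpower 0 _ would be 1) *)
Definition rho1 (K m : nat) (a b : R) : R :=
  if Req_EM_T (rho_base a b) 0 then 0
  else Rpower (rho_base a b) (2 / INR (K * m)).

(* Rescale the Lyapunov operator Y |-> A Y + Y A affinely to an operator L that is self-adjoint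
   for the Frobenius inner product and has numerical range in [-1, 1].  A solution X of
   A X + X A = q_i p q_j^T satisfies L X = gamma X + C, where C is supported at (i, j) and
   gamma = (a + b) / (a - b) = (1 + rho^2) / (2 rho) with rho = (sqrt kappa - 1) / (sqrt kappa + 1).
   As A is m-banded, L spreads supports by at most h = K m / 2 positions of vec, so for a polynomial q
   of degree n the matrices q(L) X and q(gamma) X agree at distance > (n - 1) h from phi(i, j).
   For q = T_(n+1) - 2 rho T_n + rho^2 T_(n-1) one has q(gamma) = (1 - rho^2)^2 / (2 rho^(n+1)), while
   ||q(L) X|| <= ||(1 + rho^2) X - 2 rho L X|| = 2 rho |p| / (b - a).  This norm bound needs no
   spectral theorem: the step (c, u) |-> (L c - (I - L^2) u, c + L u) maps (X, 0) to
   (T_k(L) X, U_(k-1)(L) X) in k steps and preserves ||c||^2 + <u, (I - L^2) u>, whose second term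
   is nonnegative.  The general right-hand side follows by superposition. *)

From Stdlib Require Import Reals Lra Lia Psatz FunctionalExtensionality Classical IndefiniteDescription.
Open Scope R_scope.

From mathcomp Require ssreflect ssrbool eqtype ssrnat fintype bigop.
From mathcomp Require ssralg matrix mxalgebra Rstruct.

Module MatrixSolve.
Import ssreflect ssrbool eqtype ssrnat fintype bigop.
Import ssralg matrix mxalgebra Rstruct.
Import GRing.Theory.
Local Open Scope ring_scope.

Lemma rsum_big n f : rsum n f = \sum_(i < n) f i.
Proof.
elim: n => [|n IH] /=; first by rewrite big_ord0.
by rewrite big_ord_recr /= IH.
Qed.

Lemma mvmul_surjective n (N : mat) :
  (forall v, (forall i, (i < n)%coq_nat -> mvmul n N v i = 0) ->
     forall i, (i < n)%coq_nat -> v i = 0) ->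
  forall y : vect, exists x, forall i, (i < n)%coq_nat -> mvmul n N x i = y i.
Proof.
move=> Hinj y.
pose M : 'M[R]_n := \matrix_(i < n, j < n) N i j.
pose ext (u : 'rV[R]_n) : vect :=
  fun k => if (k < n)%N =P true is ReflectT Hk then u ord0 (Ordinal Hk) else 0.
have extE u (k : 'I_n) : ext u k = u ord0 k.
  rewrite /ext; case: eqP => [Hk|]; last by rewrite ltn_ord.
  by congr (u _ _); apply: val_inj.
have mulE u i (Hi : (i < n)%N) : mvmul n N (ext u) i = (u *m M^T) ord0 (Ordinal Hi).
  rewrite /mvmul rsum_big mxE; apply: eq_bigr => k _.
  by rewrite extE !mxE mulrC.
have HU : M \in unitmx.
  rewrite -unitmx_tr -row_free_unit -kermx_eq0; apply/eqP/matrixP => k l.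
  pose u := row k (kermx M^T).
  have Hu : u *m M^T = 0 by rewrite /u -row_mul mulmx_ker row0.
  have -> : kermx M^T k l = u ord0 l by rewrite /u [RHS]mxE.
  rewrite [RHS]mxE -extE.
  apply: (Hinj (ext u)); last exact/ltP.
  move=> i /ltP Hi.
  by rewrite (mulE _ _ Hi) Hu mxE.
pose x := (invmx M *m \col_(i < n) y i)^T.
exists (ext x) => i /ltP Hi.
by rewrite (mulE _ _ Hi) /x -trmx_mul mulKVmx // !mxE.
Qed.
End MatrixSolve.

(** * Finite sums *)

Lemma rsum_ext n f g : (forall k, (k < n)%nat -> f k = g k) -> rsum n f = rsum n g.
Proof. induction n; simpl; intros H; auto. rewrite IHn by (intros; apply H; lia). rewrite H by lia; auto. Qed.

Lemma rsum_add n f g : rsum n (fun k => f k + g k) = rsum n f + rsum n g.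
Proof. induction n; simpl; [lra|]. rewrite IHn; lra. Qed.

Lemma rsum_sub n f g : rsum n (fun k => f k - g k) = rsum n f - rsum n g.
Proof. induction n; simpl; [lra|]. rewrite IHn; lra. Qed.

Lemma rsum_scal n c f : rsum n (fun k => c * f k) = c * rsum n f.
Proof. induction n; simpl; [lra|]. rewrite IHn; lra. Qed.

Lemma rsum_scalr n c f : rsum n (fun k => f k * c) = rsum n f * c.
Proof. induction n; simpl; [lra|]. rewrite IHn; lra. Qed.

Lemma rsum_eq0 n f : (forall k, (k < n)%nat -> f k = 0) -> rsum n f = 0.
Proof. induction n; simpl; intros H; auto. rewrite IHn, H by (try intros; apply H || lia; lia). lra. Qed.

Lemma rsum_swap n m (f : nat -> nat -> R) :
  rsum n (fun i => rsum m (fun j => f i j)) = rsum m (fun j => rsum n (fun i => f i j)).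
Proof.
induction n; simpl.
- symmetry; apply rsum_eq0; auto.
- rewrite IHn, <- rsum_add; auto.
Qed.

Lemma rsum_le n f g : (forall k, (k < n)%nat -> f k <= g k) -> rsum n f <= rsum n g.
Proof.
induction n; simpl; intros H; [lra|].
assert (rsum n f <= rsum n g) by (apply IHn; intros; apply H; lia).
assert (f n <= g n) by (apply H; lia). lra.
Qed.

Lemma rsum_ge0 n f : (forall k, (k < n)%nat -> 0 <= f k) -> 0 <= rsum n f.
Proof. intros H. rewrite <- (rsum_eq0 n (fun _ => 0)) by auto. apply rsum_le; auto. Qed.

Lemma rsum_single n f j : (j < n)%nat -> (forall k, (k < n)%nat -> k <> j -> f k = 0) ->
  rsum n f = f j.
Proof.
induction n; intros Hj H; [lia|]. simpl.
destruct (Nat.eq_dec j n) as [->|Hne].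
- rewrite rsum_eq0; [lra|]. intros k Hk; apply H; lia.
- rewrite IHn, (H n) by (try lia; intros; apply H; lia). lra.
Qed.

Lemma rsum_term_le n f j : (forall k, (k < n)%nat -> 0 <= f k) -> (j < n)%nat -> f j <= rsum n f.
Proof.
induction n; intros H Hj; [lia|]. simpl.
destruct (Nat.eq_dec j n) as [->|Hne].
- assert (0 <= rsum n f) by (apply rsum_ge0; intros; apply H; lia). lra.
- assert (f j <= rsum n f) by (apply IHn; try lia; intros; apply H; lia).
  assert (0 <= f n) by (apply H; lia). lra.
Qed.

Lemma Rabs_rsum_le n f : Rabs (rsum n f) <= rsum n (fun k => Rabs (f k)).
Proof. induction n; simpl. rewrite Rabs_R0; lra. eapply Rle_trans; [apply Rabs_triang|]. lra. Qed.

Lemma Rabs_rsum2_le K f g : (forall i j, (i < K)%nat -> (j < K)%nat -> Rabs (f i j) <= g i j) ->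
  Rabs (rsum K (fun i => rsum K (fun j => f i j))) <= rsum K (fun i => rsum K (fun j => g i j)).
Proof.
intros H. eapply Rle_trans; [apply Rabs_rsum_le|]. apply rsum_le; intros i Hi.
eapply Rle_trans; [apply Rabs_rsum_le|]. apply rsum_le; intros j Hj. auto.
Qed.

Definition ev (j : nat) : vect := fun i => if Nat.eqb i j then 1 else 0.

Lemma ev_sym i j : ev i j = ev j i.
Proof. unfold ev. rewrite Nat.eqb_sym. auto. Qed.

Lemma rsum_ev n f j : (j < n)%nat -> rsum n (fun k => f k * ev j k) = f j.
Proof.
intros Hj. rewrite (rsum_single n _ j Hj).
- unfold ev. rewrite Nat.eqb_refl; ring.
- intros k _ Hk. unfold ev. apply Nat.eqb_neq in Hk. rewrite Hk; ring.
Qed.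

(** * Rayleigh quotients *)

Definition sqnorm K (v : vect) : R := rsum K (fun i => v i * v i).
Definition bil K (B : mat) (v w : vect) : R := rsum K (fun i => v i * mvmul K B w i).

Lemma sqnorm_ge0 K v : 0 <= sqnorm K v.
Proof. apply rsum_ge0; intros; nra. Qed.

Lemma sqnorm_entry_le K v i : (i < K)%nat -> v i * v i <= sqnorm K v.
Proof. intros; apply (rsum_term_le K (fun i => v i * v i)); auto; intros; nra. Qed.

Lemma Rabs_mul_entries_le K v i j : (i < K)%nat -> (j < K)%nat -> Rabs (v i * v j) <= sqnorm K v.
Proof.
intros Hi Hj. assert (H1 := sqnorm_entry_le K v i Hi). assert (H2 := sqnorm_entry_le K v j Hj).
set (x := v i) in *; set (y := v j) in *; clearbody x y.
pose proof (Rle_0_sqr (x - y)). pose proof (Rle_0_sqr (x + y)). unfold Rsqr in *.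
unfold Rabs; destruct (Rcase_abs (x * y)); nra.
Qed.

Lemma sqnorm_eq0 K v : sqnorm K v <= 0 -> forall i, (i < K)%nat -> v i = 0.
Proof. intros H i Hi. assert (H1 := sqnorm_entry_le K v i Hi). nra. Qed.

Lemma sqnorm_ev K : (1 <= K)%nat -> sqnorm K (ev 0) = 1.
Proof. intros HK. unfold sqnorm. rewrite (rsum_ev K (ev 0) 0) by lia. reflexivity. Qed.

Lemma bil_sym K B v w : symmetric K B -> bil K B v w = bil K B w v.
Proof.
intros HB. unfold bil, mvmul.
rewrite (rsum_ext K _ (fun i => rsum K (fun k => v i * B i k * w k))).
2:{ intros; rewrite <- rsum_scal; apply rsum_ext; intros; ring. }
rewrite rsum_swap. apply rsum_ext; intros k Hk.
rewrite <- rsum_scal; apply rsum_ext; intros i Hi. rewrite (HB i k) by auto. ring.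
Qed.

Lemma mvmul_comb K B v w t i :
  mvmul K B (fun k => v k + t * w k) i = mvmul K B v i + t * mvmul K B w i.
Proof. unfold mvmul. rewrite <- rsum_scal, <- rsum_add. apply rsum_ext; intros; ring. Qed.

Lemma bil_expand K B v w t : symmetric K B ->
  bil K B (fun k => v k + t * w k) (fun k => v k + t * w k)
  = bil K B v v + 2 * t * bil K B v w + t * t * bil K B w w.
Proof.
intros HB. assert (E : bil K B w v = bil K B v w) by (apply bil_sym; auto).
unfold bil in *.
rewrite (rsum_ext K _ (fun i => v i * mvmul K B v i + t * (v i * mvmul K B w i)
   + t * (w i * mvmul K B v i) + t * t * (w i * mvmul K B w i)))
  by (intros; rewrite mvmul_comb; ring).
rewrite !rsum_add, !rsum_scal, E. ring.
Qed.

Lemma quadratic_ge0_discr p q r : 0 <= r -> (forall t, 0 <= p + 2 * q * t + r * t * t) ->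
  q * q <= p * r.
Proof.
intros Hr H. destruct (Req_dec r 0) as [->|Hr0].
- destruct (Req_dec q 0) as [->|Hq]; [nra|].
  specialize (H (- (p + 1) / (2 * q))).
  replace (p + 2 * q * (- (p + 1) / (2 * q)) + 0 * (- (p + 1) / (2 * q)) * (- (p + 1) / (2 * q)))
    with (-1) in H by (field; auto). lra.
- specialize (H (- q / r)).
  replace (p + 2 * q * (- q / r) + r * (- q / r) * (- q / r)) with ((p * r - q * q) / r) in H
    by (field; auto).
  assert (0 <= p * r - q * q); [|lra].
  replace (p * r - q * q) with ((p * r - q * q) / r * r) by (field; auto). nra.
Qed.

Lemma bil_cauchy_schwarz K B v w : symmetric K B -> (forall x, 0 <= bil K B x x) ->
  bil K B v w * bil K B v w <= bil K B v v * bil K B w w.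
Proof.
intros HB Hpos. apply quadratic_ge0_discr; [apply Hpos|]. intros t.
assert (H := Hpos (fun k => v k + t * w k)). rewrite bil_expand in H by auto. lra.
Qed.

Lemma Rabs_bil_le K A v :
  Rabs (bil K A v v) <= rsum K (fun i => rsum K (fun k => Rabs (A i k))) * sqnorm K v.
Proof.
unfold bil, mvmul.
rewrite (rsum_ext K _ (fun i => rsum K (fun k => A i k * (v i * v k)))).
2:{ intros; rewrite <- rsum_scal; apply rsum_ext; intros; ring. }
eapply Rle_trans; [apply Rabs_rsum_le|]. rewrite <- rsum_scalr. apply rsum_le; intros i Hi.
eapply Rle_trans; [apply Rabs_rsum_le|]. rewrite <- rsum_scalr. apply rsum_le; intros k Hk.
rewrite Rabs_mult. apply Rmult_le_compat_l; [apply Rabs_pos|]. apply Rabs_mul_entries_le; auto.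
Qed.

Lemma rayleigh_sup K A : (1 <= K)%nat ->
  exists mu, (forall v, bil K A v v <= mu * sqnorm K v) /\
    (forall eps, 0 < eps -> exists v, (mu - eps) * sqnorm K v < bil K A v v).
Proof.
intros HK.
set (S := fun r => exists v, 0 < sqnorm K v /\ r * sqnorm K v = bil K A v v).
assert (HSb : bound S).
{ exists (rsum K (fun i => rsum K (fun k => Rabs (A i k)))). intros r [v [Hv Hr]].
  apply Rmult_le_reg_r with (sqnorm K v); auto. rewrite Hr.
  eapply Rle_trans; [apply Rle_abs|apply Rabs_bil_le]. }
assert (HS0 : S (bil K A (ev 0) (ev 0))).
{ exists (ev 0). rewrite sqnorm_ev by auto. split; [lra|ring]. }
destruct (completeness S HSb (ex_intro _ _ HS0)) as [mu [Hub Hlub]].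
exists mu. split.
- intros v. destruct (Rle_lt_dec (sqnorm K v) 0) as [Hz|Hp].
  + assert (sqnorm K v = 0) by (assert (H := sqnorm_ge0 K v); lra).
    unfold bil. rewrite rsum_eq0; [nra|].
    intros i Hi. rewrite (sqnorm_eq0 K v Hz i Hi). ring.
  + assert (Hr : S (bil K A v v / sqnorm K v)) by (exists v; split; [auto|field; lra]).
    assert (H := Hub _ Hr).
    replace (bil K A v v) with (bil K A v v / sqnorm K v * sqnorm K v) by (field; lra).
    apply Rmult_le_compat_r; lra.
- intros eps Heps. apply NNPP. intros Hno.
  assert (mu <= mu - eps); [|lra].
  apply Hlub. intros r [v [Hv Hr]]. apply Rnot_lt_le. intros Hlt. apply Hno.
  exists v. rewrite <- Hr. apply Rmult_lt_compat_r; auto.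
Qed.

Lemma psd_coercive_of_injective K B : symmetric K B -> (forall v, 0 <= bil K B v v) ->
  (forall v, (forall i, (i < K)%nat -> mvmul K B v i = 0) -> forall i, (i < K)%nat -> v i = 0) ->
  exists c, 0 < c /\ forall v, c * sqnorm K v <= bil K B v v.
Proof.
intros HB Hpos Hinj.
assert (Hsurj := MatrixSolve.mvmul_surjective K B Hinj).
set (col := fun j => proj1_sig (constructive_indefinite_description _ (Hsurj (ev j)))).
assert (Hcol : forall j i, (i < K)%nat -> mvmul K B (col j) i = ev j i).
{ intros j. unfold col. destruct (constructive_indefinite_description _ _) as [x Hx]. exact Hx. }
set (G := rsum K (fun j => rsum K (fun i => Rabs (col j i)))).
assert (HG : 0 <= G) by (apply rsum_ge0; intros; apply rsum_ge0; intros; apply Rabs_pos).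
exists (/ (G + 1)). split; [apply Rinv_0_lt_compat; lra|]. intros v.
set (w := fun k => rsum K (fun j => v j * col j k)).
assert (Hw : forall i, (i < K)%nat -> mvmul K B w i = v i).
{ intros i Hi. unfold mvmul, w.
  rewrite (rsum_ext K _ (fun k => rsum K (fun j => v j * (B i k * col j k)))).
  2:{ intros; rewrite <- rsum_scal; apply rsum_ext; intros; ring. }
  rewrite rsum_swap, <- (rsum_ev K v i Hi). apply rsum_ext; intros j _.
  rewrite rsum_scal, ev_sym. f_equal. apply Hcol; auto. }
assert (Hvw : bil K B v w = sqnorm K v) by (apply rsum_ext; intros; rewrite Hw; auto).
assert (Hww : bil K B w w <= G * sqnorm K v).
{ unfold bil. rewrite (rsum_ext K _ (fun i => rsum K (fun j => col j i * (v j * v i)))).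
  2:{ intros i Hi. rewrite Hw by auto. unfold w. rewrite <- rsum_scalr. apply rsum_ext; intros; ring. }
  rewrite rsum_swap. unfold G. rewrite <- rsum_scalr. apply rsum_le; intros j Hj.
  rewrite <- rsum_scalr. apply rsum_le; intros i Hi.
  eapply Rle_trans; [apply Rle_abs|]. rewrite Rabs_mult.
  apply Rmult_le_compat_l; [apply Rabs_pos|]. apply Rabs_mul_entries_le; auto. }
(* Cauchy-Schwarz for the semi-inner product of B, with B w = v:
   |v|^4 = <v, B w>^2 <= <v, B v> <w, B w> <= <v, B v> G |v|^2. *)
assert (Hcs := bil_cauchy_schwarz K B v w HB Hpos). rewrite Hvw in Hcs.
assert (Hvv := Hpos v). assert (Hs := sqnorm_ge0 K v).
assert (Hle : sqnorm K v <= (G + 1) * bil K B v v).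
{ destruct (Req_dec (sqnorm K v) 0) as [Hz|Hz]; [nra|].
  assert (sqnorm K v * sqnorm K v <= sqnorm K v * (G * bil K B v v)) by nra.
  assert (sqnorm K v <= G * bil K B v v) by (apply Rmult_le_reg_l with (sqnorm K v); lra). nra. }
apply Rmult_le_reg_l with (G + 1); [lra|].
rewrite <- Rmult_assoc, Rinv_r, Rmult_1_l by lra. exact Hle.
Qed.

Definition shifted_by (mu : R) (A : mat) : mat := fun i k => mu * ev i k - A i k.

Lemma mvmul_shifted K mu A v i : (i < K)%nat ->
  mvmul K (shifted_by mu A) v i = mu * v i - mvmul K A v i.
Proof.
intros Hi. unfold mvmul, shifted_by. rewrite <- (rsum_ev K v i Hi), <- rsum_scal, <- rsum_sub.
apply rsum_ext; intros; rewrite ev_sym; ring.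
Qed.

Lemma bil_shifted K mu A v : bil K (shifted_by mu A) v v = mu * sqnorm K v - bil K A v v.
Proof.
unfold bil, sqnorm. rewrite <- rsum_scal, <- rsum_sub. apply rsum_ext; intros.
rewrite mvmul_shifted by auto. ring.
Qed.

(* Otherwise mu I - A would be injective, hence coercive, and mu would not be the least upper
   bound of the Rayleigh quotient. *)
Lemma rayleigh_max_eigen K A : (1 <= K)%nat -> symmetric K A ->
  exists mu, is_eigenvalue K A mu /\ forall v, bil K A v v <= mu * sqnorm K v.
Proof.
intros HK HA.
destruct (rayleigh_sup K A HK) as [mu [Hup Happrox]].
exists mu. split; auto.
set (B := shifted_by mu A).
destruct (classic (exists v, nonzero_vect K v /\ forall i, (i < K)%nat -> mvmul K B v i = 0))
  as [[v [Hnz Hv]]|Hno].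
{ exists v. split; auto. intros i Hi. specialize (Hv i Hi). unfold B in Hv.
  rewrite mvmul_shifted in Hv by auto. lra. }
exfalso.
assert (HBsym : symmetric K B).
{ intros i k Hi Hk. unfold B, shifted_by. rewrite ev_sym, HA by auto. auto. }
assert (HBpos : forall v, 0 <= bil K B v v) by (intros v; unfold B; rewrite bil_shifted; specialize (Hup v); lra).
assert (HBinj : forall v, (forall i, (i < K)%nat -> mvmul K B v i = 0) -> forall i, (i < K)%nat -> v i = 0).
{ intros v Hv i Hi. apply NNPP. intros Hne. apply Hno. exists v. split; [exists i|]; auto. }
destruct (psd_coercive_of_injective K B HBsym HBpos HBinj) as [c [Hc Hcoer]].
destruct (Happrox c Hc) as [v Hv].
specialize (Hcoer v). unfold B in Hcoer. rewrite bil_shifted in Hcoer. lra.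
Qed.

Definition rayleigh_bounded K A a b : Prop := forall v, a * sqnorm K v <= bil K A v v <= b * sqnorm K v.

Lemma rayleigh_bounded_extremal K A a b : (1 <= K)%nat -> symmetric K A ->
  is_lambda_min K A a -> is_lambda_max K A b -> rayleigh_bounded K A a b.
Proof.
intros HK HA [_ Hmin] [_ Hmax] v. split.
- assert (HA' : symmetric K (shifted_by 0 A)).
  { intros i j Hi Hj. unfold shifted_by. rewrite HA by auto. ring. }
  destruct (rayleigh_max_eigen K _ HK HA') as [mu [[w [Hw Hev]] Hup]].
  assert (He : is_eigenvalue K A (- mu)).
  { exists w. split; auto. intros i Hi. specialize (Hev i Hi). rewrite mvmul_shifted in Hev by auto. lra. }
  assert (H1 := Hmin _ He). specialize (Hup v). rewrite bil_shifted in Hup.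
  assert (H3 := sqnorm_ge0 K v). nra.
- destruct (rayleigh_max_eigen K A HK HA) as [mu [He Hup]].
  assert (H1 := Hmax _ He). specialize (Hup v). assert (H3 := sqnorm_ge0 K v). nra.
Qed.

Lemma lambda_max_neg K A b : neg_definite K A -> is_lambda_max K A b -> b < 0.
Proof.
intros HN [[v [Hv He]] _].
assert (H := HN v Hv).
rewrite (rsum_ext K _ (fun i => b * (v i * v i))) in H by (intros; rewrite He; auto; ring).
rewrite rsum_scal in H. destruct Hv as [i [Hi Hvi]].
assert (H1 := sqnorm_entry_le K v i Hi). unfold sqnorm in H1.
assert (0 < v i * v i) by (destruct (Rlt_or_le 0 (v i)); [nra|]; assert (v i < 0) by lra; nra).
destruct (Rlt_or_le b 0); auto. nra.
Qed.

Lemma lambda_min_le_max K A a b : is_lambda_min K A a -> is_lambda_max K A b -> a <= b.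
Proof. intros [_ H] [He _]. apply H, He. Qed.

(** * Self-adjoint operators and Chebyshev iteration *)

Definition frob (K : nat) (X Y : mat) : R := rsum K (fun r => rsum K (fun c => X r c * Y r c)).
Definition madd (X Y : mat) : mat := fun r c => X r c + Y r c.
Definition msub (X Y : mat) : mat := fun r c => X r c - Y r c.
Definition mscal (l : R) (X : mat) : mat := fun r c => l * X r c.
Definition mzero : mat := fun _ _ => 0.

Lemma mat_ext (X Y : mat) : (forall r c, X r c = Y r c) -> X = Y.
Proof. intros H. do 2 (apply functional_extensionality; intro). apply H. Qed.

Lemma frob_sym K X Y : frob K X Y = frob K Y X.
Proof. unfold frob. apply rsum_ext; intros; apply rsum_ext; intros; ring. Qed.

Lemma frob_addl K X Y Z : frob K (madd X Y) Z = frob K X Z + frob K Y Z.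
Proof.
unfold frob, madd. rewrite <- rsum_add. apply rsum_ext; intros.
rewrite <- rsum_add. apply rsum_ext; intros; ring.
Qed.

Lemma frob_subl K X Y Z : frob K (msub X Y) Z = frob K X Z - frob K Y Z.
Proof.
unfold frob, msub. rewrite <- rsum_sub. apply rsum_ext; intros.
rewrite <- rsum_sub. apply rsum_ext; intros; ring.
Qed.

Lemma frob_scall K l X Y : frob K (mscal l X) Y = l * frob K X Y.
Proof.
unfold frob, mscal. rewrite <- rsum_scal. apply rsum_ext; intros.
rewrite <- rsum_scal. apply rsum_ext; intros; ring.
Qed.

Lemma frob_addr K X Y Z : frob K Z (madd X Y) = frob K Z X + frob K Z Y.
Proof. rewrite frob_sym, frob_addl, (frob_sym K X), (frob_sym K Y); auto. Qed.

Lemma frob_subr K X Y Z : frob K Z (msub X Y) = frob K Z X - frob K Z Y.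
Proof. rewrite frob_sym, frob_subl, (frob_sym K X), (frob_sym K Y); auto. Qed.

Lemma frob_scalr K l X Y : frob K Y (mscal l X) = l * frob K Y X.
Proof. rewrite frob_sym, frob_scall, frob_sym; auto. Qed.

Lemma frob_0l K Y : frob K mzero Y = 0.
Proof. unfold frob, mzero. apply rsum_eq0; intros; apply rsum_eq0; intros; ring. Qed.

Lemma frob_0r K Y : frob K Y mzero = 0.
Proof. rewrite frob_sym; apply frob_0l. Qed.

Lemma frob_ge0 K X : 0 <= frob K X X.
Proof. apply rsum_ge0; intros; apply rsum_ge0; intros. nra. Qed.

Lemma frob_ext K X X' Y Y' :
  (forall r c, (r < K)%nat -> (c < K)%nat -> X r c = X' r c /\ Y r c = Y' r c) ->
  frob K X Y = frob K X' Y'.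
Proof. intros H. apply rsum_ext; intros; apply rsum_ext; intros. destruct (H k k0) as [-> ->]; auto. Qed.

Lemma frob_entry_le K X r c : (r < K)%nat -> (c < K)%nat -> X r c * X r c <= frob K X X.
Proof.
intros Hr Hc. unfold frob.
eapply Rle_trans; [| apply (rsum_term_le K _ r)]; auto.
- apply (rsum_term_le K (fun c0 => X r c0 * X r c0) c); auto. intros; nra.
- intros; apply rsum_ge0; intros; nra.
Qed.

Lemma frob_le0_entries K X : frob K X X <= 0 -> forall r c, (r < K)%nat -> (c < K)%nat -> X r c = 0.
Proof. intros H r c Hr Hc. assert (H1 := frob_entry_le K X r c Hr Hc). nra. Qed.

Section SelfAdjoint.
Variable K : nat.
Variable L : mat -> mat.
Hypothesis L_add : forall X Y, L (madd X Y) = madd (L X) (L Y).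
Hypothesis L_scal : forall l X, L (mscal l X) = mscal l (L X).
Hypothesis L_sym : forall X Y, frob K X (L Y) = frob K (L X) Y.

Lemma frob_L X Y : frob K (L X) Y = frob K X (L Y).
Proof. symmetry; apply L_sym. Qed.

Lemma L_sub X Y : L (msub X Y) = msub (L X) (L Y).
Proof.
replace (msub X Y) with (madd X (mscal (-1) Y))
  by (apply mat_ext; intros; unfold madd, msub, mscal; ring).
rewrite L_add, L_scal. apply mat_ext; intros; unfold madd, msub, mscal; ring.
Qed.

Lemma L_zero : L mzero = mzero.
Proof.
replace mzero with (mscal 0 mzero) at 1 by (apply mat_ext; intros; unfold mscal, mzero; ring).
rewrite L_scal. apply mat_ext; intros; unfold mscal, mzero; ring.
Qed.

Ltac expand_frob := repeat rewrite ?L_add, ?L_sub, ?L_scal, ?frob_addl, ?frob_addr,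
  ?frob_subl, ?frob_subr, ?frob_scall, ?frob_scalr.

Section NumericalRange.
Variable g : R.
Hypothesis numrange : forall Z, - (g * frob K Z Z) <= frob K Z (L Z) <= g * frob K Z Z.

Lemma frob_L_polarization X t :
  4 * t * frob K (L X) (L X) <= g * (2 * frob K X X + 2 * t * t * frob K (L X) (L X)).
Proof.
assert (H1 := numrange (madd X (mscal t (L X)))).
assert (H2 := numrange (msub X (mscal t (L X)))).
expand_frob.
assert (E1 : frob K X (L (L X)) = frob K (L X) (L X)) by (rewrite frob_L; auto).
assert (E2 : frob K (L X) X = frob K X (L X)) by apply frob_sym.
revert H1 H2. expand_frob. rewrite ?E1, ?E2. intros. nra.
Qed.

Lemma frob_L_norm_le X : 0 <= g -> frob K (L X) (L X) <= g * g * frob K X X.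
Proof.
intros Hg.
assert (Hs := frob_ge0 K (L X)). assert (Hx := frob_ge0 K X).
destruct (Req_dec g 0) as [Hg0|Hg0].
- assert (H1 := frob_L_polarization X 1). rewrite Hg0 in *. nra.
- assert (H1 := frob_L_polarization X (/ g)).
  set (s := frob K (L X) (L X)) in *. set (x := frob K X X) in *.
  replace (g * (2 * x + 2 * / g * / g * s)) with (2 * g * x + 2 * / g * s) in H1 by (field; lra).
  apply Rmult_le_compat_l with (r := g) in H1; [|lra].
  replace (g * (4 * / g * s)) with (4 * s) in H1 by (field; lra).
  replace (g * (2 * g * x + 2 * / g * s)) with (2 * (g * g * x) + 2 * s) in H1 by (field; lra).
  lra.
Qed.
End NumericalRange.

(* With L = cos t, cheb_step mimics (cos k t, sin k t / sin t) |-> (cos (k+1) t, sin (k+1) t / sin t):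
   from (X, 0) it produces (T_k(L) X, U_(k-1)(L) X) and it preserves cheb_energy, the analogue of
   cos^2 + sin^2.  cheb_seed is the pair one step before (X, 0). *)
Definition defect X := msub X (L (L X)).
Definition cheb_step (p : mat * mat) : mat * mat :=
  (msub (L (fst p)) (defect (snd p)), madd (fst p) (L (snd p))).
Definition cheb_energy (p : mat * mat) : R :=
  frob K (fst p) (fst p) + frob K (snd p) (defect (snd p)).
Definition padd (p q : mat * mat) : mat * mat := (madd (fst p) (fst q), madd (snd p) (snd q)).
Definition pscal l (p : mat * mat) : mat * mat := (mscal l (fst p), mscal l (snd p)).
Definition cheb_seed (X : mat) : mat * mat := (L X, mscal (-1) X).

Lemma cheb_energy_step p : cheb_energy (cheb_step p) = cheb_energy p.
Proof.
destruct p as [c u]. unfold cheb_energy, cheb_step, defect; simpl. expand_frob.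
repeat rewrite frob_L.
assert (E1 : frob K u (L c) = frob K c (L u)) by (rewrite frob_sym, frob_L; auto).
assert (E2 : frob K u (L (L (L c))) = frob K c (L (L (L u)))) by (rewrite frob_sym, !frob_L; auto).
assert (E3 : frob K u c = frob K c u) by apply frob_sym.
assert (E4 : frob K u (L (L c)) = frob K c (L (L u))) by (rewrite frob_sym, !frob_L; auto).
rewrite ?E1, ?E2, ?E3, ?E4. ring.
Qed.

Lemma defect_add X Y : defect (madd X Y) = madd (defect X) (defect Y).
Proof. unfold defect. rewrite !L_add. apply mat_ext; intros; unfold madd, msub; ring. Qed.

Lemma defect_scal l X : defect (mscal l X) = mscal l (defect X).
Proof. unfold defect. rewrite !L_scal. apply mat_ext; intros; unfold mscal, msub; ring. Qed.

Lemma cheb_step_add p q : cheb_step (padd p q) = padd (cheb_step p) (cheb_step q).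
Proof.
unfold cheb_step, padd; simpl. rewrite L_add, defect_add, L_add.
f_equal; apply mat_ext; intros; unfold madd, msub; ring.
Qed.

Lemma cheb_step_scal l p : cheb_step (pscal l p) = pscal l (cheb_step p).
Proof.
unfold cheb_step, pscal; simpl. rewrite L_scal, defect_scal, L_scal.
f_equal; apply mat_ext; intros; unfold madd, mscal, msub; ring.
Qed.

Lemma iter_cheb_step_add n p q :
  Nat.iter n cheb_step (padd p q) = padd (Nat.iter n cheb_step p) (Nat.iter n cheb_step q).
Proof. induction n; simpl; auto. rewrite IHn, cheb_step_add; auto. Qed.

Lemma iter_cheb_step_scal n l p :
  Nat.iter n cheb_step (pscal l p) = pscal l (Nat.iter n cheb_step p).
Proof. induction n; simpl; auto. rewrite IHn, cheb_step_scal; auto. Qed.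

Lemma cheb_energy_iter n p : cheb_energy (Nat.iter n cheb_step p) = cheb_energy p.
Proof. induction n; simpl; auto. rewrite cheb_energy_step; auto. Qed.

Lemma iter_add_cheb_step n m p :
  Nat.iter (n + m) cheb_step p = Nat.iter n cheb_step (Nat.iter m cheb_step p).
Proof. induction n; simpl; auto. rewrite IHn; auto. Qed.

Lemma cheb_step_seed X : cheb_step (cheb_seed X) = (X, mzero).
Proof.
unfold cheb_step, cheb_seed, defect; simpl. rewrite !L_scal.
f_equal; apply mat_ext; intros; unfold madd, mscal, msub, mzero; ring.
Qed.

Lemma cheb_step_X0 X : cheb_step (X, mzero) = (L X, X).
Proof.
unfold cheb_step, defect; simpl. rewrite !L_zero.
f_equal; apply mat_ext; intros; unfold madd, mscal, msub, mzero; ring.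
Qed.

Lemma cheb_combination_norm_le (rho : R) (X : mat) (n : nat) :
  (forall Z, - frob K Z Z <= frob K Z (L Z) <= frob K Z Z) ->
  let T k := fst (Nat.iter k cheb_step (cheb_seed X)) in
  let W := madd (madd (T (S (S n))) (mscal (-2 * rho) (T (S n)))) (mscal (rho * rho) (T n)) in
  let G := msub (mscal (1 + rho * rho) X) (mscal (2 * rho) (L X)) in
  frob K W W <= frob K G G.
Proof.
intros Hrange T W G.
set (q := padd (padd (Nat.iter 2 cheb_step (cheb_seed X))
          (pscal (-2 * rho) (Nat.iter 1 cheb_step (cheb_seed X)))) (pscal (rho * rho) (cheb_seed X))).
assert (HW : fst (Nat.iter n cheb_step q) = W).
{ unfold q. rewrite !iter_cheb_step_add, !iter_cheb_step_scal, <- !iter_add_cheb_step.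
  replace (n + 2)%nat with (S (S n)) by lia. replace (n + 1)%nat with (S n) by lia. auto. }
assert (HG : cheb_energy q = frob K G G).
{ unfold q. simpl. rewrite cheb_step_seed, cheb_step_X0.
  unfold cheb_energy, padd, pscal, cheb_seed, G, defect; simpl. expand_frob.
  assert (E1 : frob K (L X) X = frob K X (L X)) by apply frob_sym.
  assert (E2 : frob K X (L (L X)) = frob K (L X) (L X)) by (rewrite frob_L; auto).
  rewrite ?L_zero, ?frob_0l, ?frob_0r, ?E1, ?E2. ring. }
(* The defect term is nonnegative since ||L u|| <= ||u||. *)
assert (Hpos : 0 <= frob K (snd (Nat.iter n cheb_step q)) (defect (snd (Nat.iter n cheb_step q)))).
{ set (u := snd (Nat.iter n cheb_step q)). unfold defect. rewrite frob_subr, <- frob_L.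
  assert (H := frob_L_norm_le 1 ltac:(intros Z; rewrite Rmult_1_l; apply Hrange) u ltac:(lra)). lra. }
rewrite <- (cheb_energy_iter n) in HG. unfold cheb_energy in HG. rewrite HW in HG. lra.
Qed.

End SelfAdjoint.

(** * The Lyapunov operator *)

Definition lyap K (A X : mat) : mat := fun r c => mmul K A X r c + mmul K X A r c.

Lemma lyap_add K A X Y : lyap K A (madd X Y) = madd (lyap K A X) (lyap K A Y).
Proof.
apply mat_ext; intros r c. unfold lyap, madd, mmul.
rewrite (rsum_ext K (fun k => A r k * (X k c + Y k c)) (fun k => A r k * X k c + A r k * Y k c))
  by (intros; ring).
rewrite (rsum_ext K (fun k => (X r k + Y r k) * A k c) (fun k => X r k * A k c + Y r k * A k c))
  by (intros; ring).
rewrite !rsum_add. ring.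
Qed.

Lemma lyap_scal K A l X : lyap K A (mscal l X) = mscal l (lyap K A X).
Proof.
apply mat_ext; intros r c. unfold lyap, mscal, mmul.
rewrite (rsum_ext K (fun k => A r k * (l * X k c)) (fun k => l * (A r k * X k c))) by (intros; ring).
rewrite (rsum_ext K (fun k => (l * X r k) * A k c) (fun k => l * (X r k * A k c))) by (intros; ring).
rewrite !rsum_scal. ring.
Qed.

Lemma lyap_rsum K A (F : nat -> mat) r c :
  lyap K A (fun r c => rsum K (fun i => F i r c)) r c = rsum K (fun i => lyap K A (F i) r c).
Proof.
unfold lyap, mmul. rewrite rsum_add. f_equal.
- rewrite (rsum_ext K _ (fun k => rsum K (fun i => A r k * F i k c)))
    by (intros; rewrite rsum_scal; auto).
  apply rsum_swap.
- rewrite (rsum_ext K _ (fun k => rsum K (fun i => F i r k * A k c)))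
    by (intros; rewrite rsum_scalr; auto).
  apply rsum_swap.
Qed.

Definition mcol (X : mat) (c : nat) : vect := fun r => X r c.
Definition mrow (X : mat) (r : nat) : vect := fun c => X r c.

Lemma frob_lyap K A X Y : symmetric K A ->
  frob K X (lyap K A Y) = rsum K (fun c => bil K A (mcol X c) (mcol Y c))
                          + rsum K (fun r => bil K A (mrow X r) (mrow Y r)).
Proof.
intros HA. unfold frob, lyap.
rewrite (rsum_ext K _ (fun r => rsum K (fun c => X r c * mmul K A Y r c)
                              + rsum K (fun c => X r c * mmul K Y A r c))).
2:{ intros; rewrite <- rsum_add; apply rsum_ext; intros; ring. }
rewrite rsum_add. f_equal.
- rewrite rsum_swap. auto.
- apply rsum_ext; intros r Hr. unfold bil, mrow, mvmul, mmul. apply rsum_ext; intros c Hc.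
  f_equal. apply rsum_ext; intros k Hk. rewrite (HA c k) by auto. ring.
Qed.

Lemma lyap_sym K A X Y : symmetric K A -> frob K X (lyap K A Y) = frob K (lyap K A X) Y.
Proof.
intros HA. rewrite (frob_sym K (lyap K A X) Y), !frob_lyap by auto.
f_equal; apply rsum_ext; intros; apply bil_sym; auto.
Qed.

Lemma lyap_numrange K A a b X : symmetric K A -> rayleigh_bounded K A a b ->
  2 * a * frob K X X <= frob K X (lyap K A X) <= 2 * b * frob K X X.
Proof.
intros HA Hr. rewrite frob_lyap by auto.
assert (Ecol : rsum K (fun c => sqnorm K (mcol X c)) = frob K X X) by (unfold frob; rewrite rsum_swap; auto).
assert (Erow : rsum K (fun r => sqnorm K (mrow X r)) = frob K X X) by auto.
assert (Hc : a * rsum K (fun c => sqnorm K (mcol X c)) <= rsum K (fun c => bil K A (mcol X c) (mcol X c))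
             <= b * rsum K (fun c => sqnorm K (mcol X c))).
{ rewrite <- !rsum_scal. split; apply rsum_le; intros; apply Hr. }
assert (Hw : a * rsum K (fun r => sqnorm K (mrow X r)) <= rsum K (fun r => bil K A (mrow X r) (mrow X r))
             <= b * rsum K (fun r => sqnorm K (mrow X r))).
{ rewrite <- !rsum_scal. split; apply rsum_le; intros; apply Hr. }
rewrite Ecol in Hc. rewrite Erow in Hw. lra.
Qed.

Lemma lyap_injective K A a b X : symmetric K A -> rayleigh_bounded K A a b -> b < 0 ->
  (forall r c, (r < K)%nat -> (c < K)%nat -> lyap K A X r c = 0) ->
  forall r c, (r < K)%nat -> (c < K)%nat -> X r c = 0.
Proof.
intros HA Hr Hb HX. apply frob_le0_entries.
assert (H := lyap_numrange K A a b X HA Hr).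
assert (E : frob K X (lyap K A X) = frob K X mzero) by (apply frob_ext; intros; split; auto).
rewrite E, frob_0r in H. assert (H0 := frob_ge0 K X). nra.
Qed.

Lemma linear_map_rep n (F : vect -> vect) :
  (forall x y, F (fun t => x t + y t) = (fun s => F x s + F y s)) ->
  (forall l x, F (fun t => l * x t) = (fun s => l * F x s)) ->
  (forall x y, (forall t, (t < n)%nat -> x t = y t) -> forall s, (s < n)%nat -> F x s = F y s) ->
  forall v s, (s < n)%nat -> F v s = mvmul n (fun s t => F (ev t) s) v s.
Proof.
intros F_add F_scal F_local v s Hs.
set (part := fun m t => rsum m (fun j => v j * ev j t)).
assert (Hpart : forall m, F (part m) s = rsum m (fun t => F (ev t) s * v t)).
{ induction m; simpl.
  - replace (part 0%nat) with (fun t : nat => 0 * part 0%nat t)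
      by (apply functional_extensionality; intros; unfold part; simpl; ring).
    rewrite F_scal. ring.
  - change (part (S m)) with (fun t => part m t + (fun t => v m * ev m t) t).
    rewrite F_add, F_scal, IHm. ring. }
rewrite (F_local v (part n)), Hpart; auto.
intros t Ht. unfold part. rewrite (rsum_ext n _ (fun j => v j * ev t j)) by (intros; rewrite ev_sym; auto).
rewrite rsum_ev; auto.
Qed.

Lemma mod_lt_sq K s : (s < K * K)%nat -> (s mod K < K)%nat.
Proof. intros H. apply Nat.mod_upper_bound. intros ->. lia. Qed.

Lemma div_lt_sq K s : (s < K * K)%nat -> (s / K < K)%nat.
Proof. intros H. apply Nat.Div0.div_lt_upper_bound. lia. Qed.

Lemma phi_lt K r c : (r < K)%nat -> (c < K)%nat -> (phi K r c < K * K)%nat.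
Proof. unfold phi; intros; nia. Qed.

Lemma phi_mod_div K s : (s < K * K)%nat -> phi K (s mod K) (s / K) = s.
Proof. intros H. unfold phi. rewrite Nat.mul_comm. symmetry. apply Nat.div_mod. intros ->. lia. Qed.

Lemma phi_mod K r c : (r < K)%nat -> (phi K r c mod K = r)%nat.
Proof. intros Hr. unfold phi. symmetry. apply (Nat.mod_unique _ _ c); auto; lia. Qed.

Lemma phi_div K r c : (r < K)%nat -> (phi K r c / K = c)%nat.
Proof. intros Hr. unfold phi. symmetry. apply (Nat.div_unique _ _ _ r); auto; lia. Qed.

Lemma vec_entry_phi K X r c : (r < K)%nat -> vec_entry K X (phi K r c) = X r c.
Proof. intros Hr. unfold vec_entry. rewrite phi_mod, phi_div; auto. Qed.

Definition unvec K (v : vect) : mat := fun r c => v (phi K r c).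

Lemma lyap_surjective K A a b : symmetric K A -> rayleigh_bounded K A a b -> b < 0 ->
  forall C, exists X, solves_lyap K A X C.
Proof.
intros HA Hr Hb C.
set (F := fun v s => vec_entry K (lyap K A (unvec K v)) s).
assert (F_add : forall x y, F (fun t => x t + y t) = (fun s => F x s + F y s)).
{ intros x y. unfold F. change (unvec K (fun t => x t + y t)) with (madd (unvec K x) (unvec K y)).
  rewrite lyap_add. auto. }
assert (F_scal : forall l x, F (fun t => l * x t) = (fun s => l * F x s)).
{ intros l x. unfold F. change (unvec K (fun t => l * x t)) with (mscal l (unvec K x)).
  rewrite lyap_scal. auto. }
assert (F_local : forall x y, (forall t, (t < K * K)%nat -> x t = y t) ->
                    forall s, (s < K * K)%nat -> F x s = F y s).
{ intros x y Hxy s Hs. unfold F, vec_entry, lyap, mmul, unvec.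
  assert (H1 := div_lt_sq K s Hs). assert (H2 := mod_lt_sq K s Hs).
  f_equal; apply rsum_ext; intros k Hk; rewrite Hxy; auto; apply phi_lt; auto. }
assert (HF := linear_map_rep (K * K) F F_add F_scal F_local).
assert (HFphi : forall v r c, (r < K)%nat -> (c < K)%nat -> F v (phi K r c) = lyap K A (unvec K v) r c)
  by (intros; unfold F; apply vec_entry_phi; auto).
assert (Hinj : forall v, (forall s, (s < K * K)%nat -> mvmul (K * K) (fun s t => F (ev t) s) v s = 0) ->
                 forall s, (s < K * K)%nat -> v s = 0).
{ intros v Hv s Hs. rewrite <- (phi_mod_div K s Hs).
  apply (lyap_injective K A a b (unvec K v) HA Hr Hb); [|apply mod_lt_sq|apply div_lt_sq]; auto.
  intros r c Hr' Hc'. rewrite <- HFphi, HF by (auto; apply phi_lt; auto). apply Hv, phi_lt; auto. }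
destruct (MatrixSolve.mvmul_surjective (K * K) _ Hinj (fun s => C (s mod K) (s / K))%nat) as [v Hv].
exists (unvec K v). intros r c Hr' Hc'. change (lyap K A (unvec K v) r c = C r c).
rewrite <- HFphi, HF, Hv, phi_mod, phi_div by (auto; apply phi_lt; auto). auto.
Qed.

(** * Decay away from the source *)

Lemma natdist_triangle x y z : (natdist x z <= natdist x y + natdist y z)%nat.
Proof. unfold natdist; lia. Qed.

Lemma natdist_sym x y : natdist x y = natdist y x.
Proof. unfold natdist; lia. Qed.

Lemma natdist_phi_le K r c r' c' :
  (natdist (phi K r c) (phi K r' c') <= natdist r r' + K * natdist c c')%nat.
Proof.
unfold natdist, phi.
destruct (Nat.le_ge_cases c c') as [Hc|Hc]; [replace c' with (c + (c' - c))%nat by lia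
  | replace c with (c' + (c - c'))%nat by lia]; nia.
Qed.

Lemma INR_natdist x y : Rabs (INR x - INR y) = INR (natdist x y).
Proof.
unfold natdist. destruct (Nat.le_ge_cases x y) as [H|H]; apply le_INR in H as H'.
- replace (x - y)%nat with 0%nat by lia. rewrite Nat.add_0_l, minus_INR by auto.
  rewrite Rabs_left1; [ring|lra].
- replace (y - x)%nat with 0%nat by lia. rewrite Nat.add_0_r, minus_INR by auto.
  rewrite Rabs_right; [ring|lra].
Qed.

Lemma banded_natdist K w A : banded K (2 * w) A ->
  forall r k, (r < K)%nat -> (k < K)%nat -> A r k <> 0 -> (natdist r k <= w)%nat.
Proof.
intros HB r k Hr Hk Hne. apply INR_le. rewrite <- INR_natdist.
apply Rnot_lt_le. intros H. apply Hne, HB; auto. rewrite mult_INR. simpl INR. lra.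
Qed.

(* The scalar shadow of cheb_step for L = multiplication by g; it tracks the coefficient of X. *)
Definition cheb_coef_step (g : R) (q : R * R) : R * R :=
  (fst q * g - snd q * (1 - g * g), fst q + snd q * g).
Definition cheb_coef (g : R) (n : nat) : R * R := Nat.iter n (cheb_coef_step g) (g, -1).

Section ChebValues.
Variable rho : R.
Hypothesis Hrho : 0 < rho < 1.
Let g := (1 + rho * rho) / (2 * rho).

(* For g = (rho + 1/rho) / 2 these are T_k(g) = (rho^k + rho^-k) / 2 and U_(k-1)(g). *)
Lemma cheb_coef_closed k :
  2 * rho ^ k * fst (cheb_coef g (S k)) = 1 + rho ^ k * rho ^ k /\
  (1 - rho * rho) * rho ^ k * snd (cheb_coef g (S k)) = rho * (1 - rho ^ k * rho ^ k).
Proof.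
induction k as [|k [H1 H2]].
- unfold cheb_coef; simpl. split; ring.
- assert (Ht : 0 < rho ^ k) by (apply pow_lt; lra).
  assert (0 < 1 - rho * rho) by nra.
  set (t := rho ^ k) in *.
  assert (EF : fst (cheb_coef g (S k)) = (1 + t * t) / (2 * t)).
  { apply Rmult_eq_reg_l with (2 * t); [|lra]. rewrite H1. field. lra. }
  assert (EG : snd (cheb_coef g (S k)) = rho * (1 - t * t) / ((1 - rho * rho) * t)).
  { apply Rmult_eq_reg_l with ((1 - rho * rho) * t); [|nra]. rewrite H2. field. split; lra. }
  change (cheb_coef g (S (S k))) with (cheb_coef_step g (cheb_coef g (S k))).
  unfold cheb_coef_step. cbn [fst snd].
  replace (rho ^ S k) with (rho * t) by (simpl; auto).
  rewrite EF, EG. unfold g. split; field; repeat split; lra.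
Qed.

Lemma cheb_coef_fst k : fst (cheb_coef g (S k)) = (1 + rho ^ k * rho ^ k) / (2 * rho ^ k).
Proof.
assert (Ht : 0 < rho ^ k) by (apply pow_lt; lra).
apply Rmult_eq_reg_l with (2 * rho ^ k); [|lra].
rewrite (proj1 (cheb_coef_closed k)). field. lra.
Qed.

Lemma cheb_combination_value n :
  (fst (cheb_coef g (S (S n))) - 2 * rho * fst (cheb_coef g (S n)) + rho * rho * fst (cheb_coef g n))
    * rho ^ S n = (1 - rho * rho) * (1 - rho * rho) / 2.
Proof.
rewrite !cheb_coef_fst.
destruct n as [|n].
- change (fst (cheb_coef g 0)) with g. unfold g. simpl. field. lra.
- rewrite cheb_coef_fst. assert (Ht : 0 < rho ^ n) by (apply pow_lt; lra).
  simpl. set (t := rho ^ n) in *. field. split; lra.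
Qed.
End ChebValues.

Lemma elem_rhs_far K i j p r c :
  (0 < natdist (phi K i j) (phi K r c))%nat -> elem_rhs i j p r c = 0.
Proof.
intros Hd. unfold elem_rhs.
destruct (Nat.eqb r i) eqn:E1; destruct (Nat.eqb c j) eqn:E2; simpl; auto.
apply Nat.eqb_eq in E1; apply Nat.eqb_eq in E2; subst. unfold natdist in Hd. lia.
Qed.

Lemma frob_elem_rhs K i j p Y : (i < K)%nat -> (j < K)%nat -> frob K Y (elem_rhs i j p) = Y i j * p.
Proof.
intros Hi Hj. unfold frob. rewrite (rsum_single K _ i Hi).
- rewrite (rsum_single K _ j Hj).
  + unfold elem_rhs. rewrite !Nat.eqb_refl. auto.
  + intros k _ Hk. unfold elem_rhs. apply Nat.eqb_neq in Hk. rewrite Nat.eqb_refl, Hk. simpl. ring.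
- intros k _ Hk. apply rsum_eq0. intros l _. unfold elem_rhs. apply Nat.eqb_neq in Hk. rewrite Hk. simpl. ring.
Qed.

Lemma rsum_elem_rhs K P r c : (r < K)%nat -> (c < K)%nat ->
  rsum K (fun i => rsum K (fun j => elem_rhs i j (P i j) r c)) = P r c.
Proof.
intros Hr Hc. rewrite (rsum_single K _ r Hr).
- rewrite (rsum_single K _ c Hc).
  + unfold elem_rhs. rewrite !Nat.eqb_refl. auto.
  + intros k _ Hk. unfold elem_rhs. apply Nat.eqb_neq in Hk. rewrite Nat.eqb_refl, Nat.eqb_sym, Hk. auto.
- intros k _ Hk. apply rsum_eq0. intros l _. unfold elem_rhs.
  apply Nat.eqb_neq in Hk. rewrite Nat.eqb_sym, Hk. auto.
Qed.

Section LocalizedSolution.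
Variables (K w : nat) (A : mat) (a b : R) (i j : nat) (p : R) (X : mat).
Hypothesis HK : (1 <= K)%nat.
Hypothesis HA : symmetric K A.
Hypothesis Hband : forall r k, (r < K)%nat -> (k < K)%nat -> A r k <> 0 -> (natdist r k <= w)%nat.
Hypothesis Hray : rayleigh_bounded K A a b.
Hypothesis Hab : a < b.
Hypothesis Hi : (i < K)%nat.
Hypothesis Hj : (j < K)%nat.
Hypothesis HX : solves_lyap K A X (elem_rhs i j p).

Let h := (K * w)%nat.
Let gamma := - (a + b) / (b - a).

Definition lyap_rescaled (Y : mat) : mat :=
  mscal (/ (b - a)) (madd (mscal (- (a + b)) Y) (lyap K A Y)).
Local Notation Lres := lyap_rescaled.

Lemma Lres_add Y Z : Lres (madd Y Z) = madd (Lres Y) (Lres Z).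
Proof. unfold Lres. rewrite lyap_add. apply mat_ext; intros. unfold mscal, madd. ring. Qed.

Lemma Lres_scal l Y : Lres (mscal l Y) = mscal l (Lres Y).
Proof. unfold Lres. rewrite lyap_scal. apply mat_ext; intros. unfold mscal, madd. ring. Qed.

Lemma Lres_sub Y Z : Lres (msub Y Z) = msub (Lres Y) (Lres Z).
Proof. apply L_sub; [apply Lres_add|apply Lres_scal]. Qed.

Lemma Lres_sym Y Z : frob K Y (Lres Z) = frob K (Lres Y) Z.
Proof.
unfold Lres. rewrite frob_scall, frob_scalr, frob_addl, frob_addr, frob_scall, frob_scalr, lyap_sym; auto.
Qed.

Lemma Lres_numrange Z : - frob K Z Z <= frob K Z (Lres Z) <= frob K Z Z.
Proof.
unfold Lres. rewrite frob_scalr, frob_addr, frob_scalr.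
assert (H := lyap_numrange K A a b Z HA Hray). assert (H0 := frob_ge0 K Z).
assert (Hd : 0 < b - a) by lra.
split; apply Rmult_le_reg_l with (b - a); auto; rewrite <- Rmult_assoc, Rinv_r by lra; nra.
Qed.

Lemma Lres_solution r c : (r < K)%nat -> (c < K)%nat ->
  Lres X r c = gamma * X r c + elem_rhs i j p r c / (b - a).
Proof.
intros Hr Hc. unfold Lres, mscal, madd, lyap. rewrite (HX r c Hr Hc). unfold gamma. field. lra.
Qed.

(* Level k: vanishing at vec distance > (k - 1) h from phi K i j; level 0 means identically zero. *)
Definition center_dist r c := natdist (phi K i j) (phi K r c).
Definition supported_in (k : nat) (Y : mat) : Prop :=
  forall r c, (r < K)%nat -> (c < K)%nat -> (k * h < center_dist r c + h)%nat -> Y r c = 0.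
Definition far_multiple (k : nat) (al : R) (V : mat) : Prop := supported_in k (msub V (mscal al X)).

Lemma supported_in_mono k k' Y : (k <= k')%nat -> supported_in k Y -> supported_in k' Y.
Proof.
intros Hk H r c Hr Hc Hd. apply H; auto.
assert (k * h <= k' * h)%nat by (apply Nat.mul_le_mono_r; auto). lia.
Qed.

Lemma supported_in_rhs : supported_in 1 (elem_rhs i j p).
Proof. intros r c _ _ Hd. apply (elem_rhs_far K). unfold center_dist in Hd. lia. Qed.

Lemma supported_in_Lres k Y : supported_in k Y -> supported_in (S k) (Lres Y).
Proof.
intros HY r c Hr Hc Hd. unfold Lres, mscal, madd, lyap, mmul.
assert (Hw : (w <= h)%nat) by (unfold h; nia).
assert (Hd' : (k * h < center_dist r c)%nat) by (simpl in Hd; lia).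
rewrite HY, (rsum_eq0 K (fun k0 => A r k0 * Y k0 c)), (rsum_eq0 K (fun k0 => Y r k0 * A k0 c));
  auto; try lia; [ring| |].
- intros k0 Hk0. destruct (Req_dec (A k0 c) 0) as [->|Hne]; [ring|].
  rewrite HY; auto; [ring|].
  assert (H1 : (K * natdist k0 c <= h)%nat) by (apply Nat.mul_le_mono_l, Hband; auto).
  assert (H2 := natdist_phi_le K r k0 r c).
  assert (H3 := natdist_triangle (phi K i j) (phi K r k0) (phi K r c)).
  replace (natdist r r) with 0%nat in H2 by (unfold natdist; lia).
  unfold center_dist in *. lia.
- intros k0 Hk0. destruct (Req_dec (A r k0) 0) as [->|Hne]; [ring|].
  rewrite HY; auto; [ring|].
  assert (H1 := Hband r k0 Hr Hk0 Hne).
  assert (H2 := natdist_phi_le K k0 c r c).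
  assert (H3 := natdist_triangle (phi K i j) (phi K k0 c) (phi K r c)).
  replace (natdist c c) with 0%nat in H2 by (unfold natdist; lia).
  rewrite natdist_sym in H1. unfold center_dist in *. lia.
Qed.

Lemma far_multiple_X : far_multiple 0 1 X.
Proof. intros r c _ _ _. unfold msub, mscal. ring. Qed.

Lemma far_multiple_LX : far_multiple 1 gamma (Lres X).
Proof.
intros r c Hr Hc Hd. unfold msub, mscal.
rewrite Lres_solution, (supported_in_rhs r c Hr Hc Hd) by auto. unfold Rdiv; ring.
Qed.

Lemma far_multiple_Lres k al V : far_multiple k al V -> far_multiple (S k) (al * gamma) (Lres V).
Proof.
intros H r c Hr Hc Hd.
assert (E : msub (Lres V) (mscal (al * gamma) X) r c
            = Lres (msub V (mscal al X)) r c + al * (Lres X r c - gamma * X r c)).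
{ rewrite Lres_sub, Lres_scal. unfold msub, mscal. ring. }
rewrite E, Lres_solution, (supported_in_Lres k _ H r c Hr Hc Hd) by auto.
rewrite (supported_in_mono 1 (S k) _ ltac:(lia) supported_in_rhs r c Hr Hc Hd). field. lra.
Qed.

Lemma far_multiple_add k al be V W :
  far_multiple k al V -> far_multiple k be W -> far_multiple k (al + be) (madd V W).
Proof.
intros H1 H2 r c Hr Hc Hd. specialize (H1 r c Hr Hc Hd). specialize (H2 r c Hr Hc Hd).
unfold msub, madd, mscal in *. lra.
Qed.

Lemma far_multiple_sub k al be V W :
  far_multiple k al V -> far_multiple k be W -> far_multiple k (al - be) (msub V W).
Proof.
intros H1 H2 r c Hr Hc Hd. specialize (H1 r c Hr Hc Hd). specialize (H2 r c Hr Hc Hd).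
unfold msub, mscal in *. lra.
Qed.

Lemma far_multiple_scal k l al V : far_multiple k al V -> far_multiple k (l * al) (mscal l V).
Proof.
intros H r c Hr Hc Hd. specialize (H r c Hr Hc Hd). unfold msub, mscal in *.
replace (l * V r c - l * al * X r c) with (l * (V r c - al * X r c)) by ring. rewrite H; ring.
Qed.

Lemma far_multiple_mono k k' al V : (k <= k')%nat -> far_multiple k al V -> far_multiple k' al V.
Proof. intros; eapply supported_in_mono; eauto. Qed.

Lemma far_multiple_defect k be V :
  far_multiple k be V -> far_multiple (S (S k)) (be * (1 - gamma * gamma)) (defect Lres V).
Proof.
intros H. unfold defect.
replace (be * (1 - gamma * gamma)) with (be - be * gamma * gamma) by ring.
apply far_multiple_sub; [eapply far_multiple_mono; [|exact H]; lia|].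
apply far_multiple_Lres, far_multiple_Lres, H.
Qed.

Let cheb_iter n := Nat.iter n (cheb_step Lres) (cheb_seed Lres X).
Let coef n := cheb_coef gamma n.

Lemma cheb_iter_1 : cheb_iter 1 = (X, mzero).
Proof. apply cheb_step_seed, Lres_scal. Qed.

Lemma cheb_iter_2 : cheb_iter 2 = (Lres X, X).
Proof.
change (cheb_iter 2) with (cheb_step Lres (cheb_iter 1)). rewrite cheb_iter_1.
apply cheb_step_X0, Lres_scal.
Qed.

Lemma far_multiple_cheb_iter k :
  far_multiple (S k) (fst (coef (k + 2))) (fst (cheb_iter (k + 2))) /\
  far_multiple k (snd (coef (k + 2))) (snd (cheb_iter (k + 2))).
Proof.
induction k as [|k [H1 H2]].
- simpl plus. rewrite cheb_iter_2. unfold coef. simpl. split.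
  + replace ((gamma * gamma - -1 * (1 - gamma * gamma)) * gamma - (gamma + -1 * gamma) * (1 - gamma * gamma))
      with gamma by ring. apply far_multiple_LX.
  + replace (gamma * gamma - -1 * (1 - gamma * gamma) + (gamma + -1 * gamma) * gamma) with 1 by ring.
    apply far_multiple_X.
- replace (S k + 2)%nat with (S (k + 2)) by lia.
  unfold cheb_iter, coef in *. simpl Nat.iter. unfold cheb_step, cheb_coef_step. simpl. split.
  + apply far_multiple_sub; [apply far_multiple_Lres, H1|apply far_multiple_defect, H2].
  + apply far_multiple_add; [eapply far_multiple_mono; [|exact H1]; lia|].
    eapply far_multiple_mono; [|apply far_multiple_Lres, H2]; lia.
Qed.

Lemma far_multiple_combination n rho :
  far_multiple (S n)
    (fst (coef (S (S n))) + -2 * rho * fst (coef (S n)) + rho * rho * fst (coef n))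
    (madd (madd (fst (cheb_iter (S (S n)))) (mscal (-2 * rho) (fst (cheb_iter (S n)))))
          (mscal (rho * rho) (fst (cheb_iter n)))).
Proof.
assert (Hcoef1 : fst (coef 1) = 1) by (unfold coef; simpl; ring).
assert (Hlevel : forall k, far_multiple (S (S k)) (fst (coef (S (S k)))) (fst (cheb_iter (S (S k))))).
{ intros k. destruct (far_multiple_cheb_iter k) as [H _].
  replace (k + 2)%nat with (S (S k)) in H by lia. eapply far_multiple_mono; [|exact H]; lia. }
apply far_multiple_add; [apply far_multiple_add|apply far_multiple_scal]; [|apply far_multiple_scal|].
- destruct (far_multiple_cheb_iter n) as [H _]. replace (n + 2)%nat with (S (S n)) in H by lia. exact H.
- destruct n as [|n]; [|apply Hlevel].
  rewrite cheb_iter_1, Hcoef1. eapply far_multiple_mono; [|apply far_multiple_X]; lia.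
- destruct n as [|[|n]].
  + apply far_multiple_LX.
  + rewrite cheb_iter_1, Hcoef1. eapply far_multiple_mono; [|apply far_multiple_X]; lia.
  + eapply far_multiple_mono; [|apply Hlevel]; lia.
Qed.

Lemma entry_bound_far rho n r c : 0 < rho < 1 -> gamma = (1 + rho * rho) / (2 * rho) ->
  (r < K)%nat -> (c < K)%nat -> (n * h < center_dist r c)%nat ->
  Rabs (X r c) <= Rabs p * (4 * rho / ((b - a) * ((1 - rho * rho) * (1 - rho * rho)))) * rho ^ S n.
Proof.
intros Hrho Hg Hr Hc Hd.
set (Q := fst (coef (S (S n))) + -2 * rho * fst (coef (S n)) + rho * rho * fst (coef n)).
assert (HQ : Q * rho ^ S n = (1 - rho * rho) * (1 - rho * rho) / 2).
{ rewrite <- (cheb_combination_value rho Hrho n). unfold Q, coef. rewrite Hg. ring. }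
assert (Hpow : 0 < rho ^ S n) by (apply pow_lt; lra).
assert (H1r : 0 < 1 - rho * rho) by nra.
assert (HQpos : 0 < Q) by (apply Rmult_lt_reg_r with (rho ^ S n); auto; rewrite HQ; nra).
set (W := madd (madd (fst (cheb_iter (S (S n)))) (mscal (-2 * rho) (fst (cheb_iter (S n)))))
               (mscal (rho * rho) (fst (cheb_iter n)))).
assert (HWrc : W r c = Q * X r c).
{ assert (H := far_multiple_combination n rho r c Hr Hc ltac:(rewrite Nat.mul_succ_l; lia)).
  change (W r c - Q * X r c = 0) in H. lra. }
assert (Hnorm : frob K W W <= (2 * rho / (b - a)) * (2 * rho / (b - a)) * (p * p)).
{ eapply Rle_trans; [apply (cheb_combination_norm_le K Lres Lres_add Lres_scal Lres_sym rho X n Lres_numrange)|].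
  rewrite (frob_ext K _ (mscal (- 2 * rho / (b - a)) (elem_rhs i j p)) _ (mscal (- 2 * rho / (b - a)) (elem_rhs i j p))).
  - rewrite frob_scall, frob_scalr, frob_elem_rhs by auto. unfold elem_rhs. rewrite !Nat.eqb_refl. simpl.
    right. field. lra.
  - intros r' c' Hr' Hc'. unfold msub, mscal. rewrite Lres_solution, Hg by auto. split; field; lra. }
assert (Hsq : Rabs (Q * X r c) <= Rabs (2 * rho / (b - a) * p)).
{ assert (He := frob_entry_le K W r c Hr Hc). rewrite HWrc in He.
  apply Rsqr_le_abs_0. unfold Rsqr.
  replace (2 * rho / (b - a) * p * (2 * rho / (b - a) * p))
    with (2 * rho / (b - a) * (2 * rho / (b - a)) * (p * p)) by ring.
  lra. }
rewrite Rabs_mult, (Rabs_right Q), Rabs_mult, (Rabs_right (2 * rho / (b - a))) in Hsq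
  by (apply Rle_ge; try apply Rlt_le, Rdiv_lt_0_compat; lra).
apply Rmult_le_reg_l with Q; auto. eapply Rle_trans; [exact Hsq|]. right.
replace Q with ((1 - rho * rho) * (1 - rho * rho) / 2 / rho ^ S n) by (rewrite <- HQ; field; lra).
assert (rho ^ n <> 0) by (apply pow_nonzero; lra).
simpl pow. field. repeat split; auto; lra.
Qed.
End LocalizedSolution.

(** * The constants *)

Lemma Rpower_antimono q x y : 0 < q < 1 -> x <= y -> Rpower q y <= Rpower q x.
Proof.
intros Hq Hxy. unfold Rpower. assert (Hl : ln q < 0) by (rewrite <- ln_1; apply ln_increasing; lra).
destruct (Req_dec x y) as [->|Hne]; [lra|]. apply Rlt_le, exp_increasing. nra.
Qed.

Section Constants.
Variables a b : R.
Hypothesis Hab : a < b.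
Hypothesis Hb : b < 0.

Let s := sqrt (kappa a b).

Lemma sqrt_kappa_gt1 : 1 < s /\ a = s * s * b.
Proof.
assert (Hk : 1 < kappa a b).
{ unfold kappa. apply Rmult_lt_reg_r with (- b); [lra|].
  replace (a / b * - b) with (- a) by (field; lra). lra. }
split.
- unfold s. rewrite <- sqrt_1. apply sqrt_lt_1; lra.
- unfold s. rewrite sqrt_sqrt by lra. unfold kappa. field. lra.
Qed.

Lemma rho_base_bounds : 0 < rho_base a b < 1.
Proof.
destruct sqrt_kappa_gt1 as [Hs _]. unfold rho_base. fold s.
split; [apply Rdiv_lt_0_compat; lra|].
apply Rmult_lt_reg_r with (s + 1); [lra|]. field_simplify; lra.
Qed.

Lemma center_rho_base : let rho := rho_base a b in - (a + b) / (b - a) = (1 + rho * rho) / (2 * rho).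
Proof.
destruct sqrt_kappa_gt1 as [Hs Ha]. unfold rho_base. fold s. rewrite Ha.
field. repeat split; nra.
Qed.

Lemma tau1_ge_inv : / (2 * Rabs b) <= tau1 a b.
Proof.
unfold tau1. rewrite Rabs_left by lra.
rewrite <- (Rmult_1_r (/ (2 * - b))) at 1.
apply Rmult_le_compat_l; [apply Rlt_le, Rinv_0_lt_compat; lra|apply Rmax_l].
Qed.

Lemma tau1_ge_cheb : let rho := rho_base a b in
  4 * rho / ((b - a) * ((1 - rho * rho) * (1 - rho * rho))) <= tau1 a b.
Proof.
destruct sqrt_kappa_gt1 as [Hs Ha].
unfold tau1. rewrite Rabs_left by lra.
eapply Rle_trans; [|apply Rmult_le_compat_l; [apply Rlt_le, Rinv_0_lt_compat; lra|apply Rmax_r]].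
right. unfold rho_base. fold s. replace (kappa a b) with (s * s) by (rewrite Ha; unfold kappa; field; lra).
rewrite Ha. field. repeat split; nra.
Qed.

Lemma rho_base_pow_le_rho1 K w n d : (1 <= K * w)%nat -> (d <= K * w * S n)%nat ->
  rho_base a b ^ S n <= rho1 K (2 * w) a b ^ d.
Proof.
intros Hh Hd. destruct rho_base_bounds as [H0 H1].
unfold rho1. destruct (Req_EM_T (rho_base a b) 0) as [E|_]; [lra|].
set (rho := rho_base a b) in *.
rewrite <- (Rpower_pow d) by (unfold Rpower; apply exp_pos).
rewrite <- (Rpower_pow (S n) rho), Rpower_mult by lra.
apply Rpower_antimono; [lra|].
assert (Hhp : 0 < INR (K * w)) by (apply lt_0_INR; lia).
assert (Hdh : INR d <= INR (K * w) * INR (S n)) by (rewrite <- mult_INR; apply le_INR; lia).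
replace (INR (K * (2 * w))) with (2 * INR (K * w)) by (rewrite !mult_INR; simpl; ring).
apply Rmult_le_reg_l with (INR (K * w)); auto.
replace (INR (K * w) * (2 / (2 * INR (K * w)) * INR d)) with (INR d) by (field; lra). lra.
Qed.
End Constants.

Lemma entry_bound_diag K A a b i j p X : symmetric K A -> rayleigh_bounded K A a b -> b < 0 ->
  (i < K)%nat -> (j < K)%nat -> solves_lyap K A X (elem_rhs i j p) ->
  Rabs (X i j) <= Rabs p * / (2 * Rabs b).
Proof.
intros HA Hray Hb Hi Hj HX.
assert (HF := lyap_numrange K A a b X HA Hray).
assert (E : frob K X (lyap K A X) = frob K X (elem_rhs i j p))
  by (apply frob_ext; intros; split; auto; apply HX; auto).
rewrite E, frob_elem_rhs in HF by auto.
assert (He := frob_entry_le K X i j Hi Hj).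
assert (Hxp : - (2 * b) * (Rabs (X i j) * Rabs (X i j)) <= Rabs (X i j) * Rabs p).
{ rewrite <- !Rabs_mult, (Rabs_right (X i j * X i j)) by (apply Rle_ge, Rle_0_sqr).
  assert (H1 := Rle_abs (- (X i j * p))). rewrite Rabs_Ropp in H1.
  assert (0 <= - b * (frob K X X - X i j * X i j)) by (apply Rmult_le_pos; lra). lra. }
rewrite (Rabs_left b) by lra.
assert (Hx := Rabs_pos (X i j)).
apply Rmult_le_reg_l with (2 * - b); [lra|].
replace (2 * - b * (Rabs p * / (2 * - b))) with (Rabs p) by (field; lra).
destruct (Req_dec (Rabs (X i j)) 0) as [Hz|Hz]; [rewrite Hz; assert (H := Rabs_pos p); lra|].
apply Rmult_le_reg_l with (Rabs (X i j)); [lra|]. nra.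
Qed.

(* For a = b the self-adjoint operator lyap - 2 b has numerical range {0}, hence vanishes. *)
Lemma entry_off_center_scalar K A b i j p X r c : symmetric K A -> rayleigh_bounded K A b b -> b < 0 ->
  solves_lyap K A X (elem_rhs i j p) -> (r < K)%nat -> (c < K)%nat ->
  (0 < natdist (phi K i j) (phi K r c))%nat -> X r c = 0.
Proof.
intros HA Hray Hb HX Hr Hc Hd.
set (N := fun Y => msub (lyap K A Y) (mscal (2 * b) Y)).
assert (N_add : forall Y Z, N (madd Y Z) = madd (N Y) (N Z)).
{ intros; unfold N; rewrite lyap_add; apply mat_ext; intros; unfold msub, madd, mscal; ring. }
assert (N_scal : forall l Y, N (mscal l Y) = mscal l (N Y)).
{ intros; unfold N; rewrite lyap_scal; apply mat_ext; intros; unfold msub, mscal; ring. }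
assert (N_sym : forall Y Z, frob K Y (N Z) = frob K (N Y) Z).
{ intros; unfold N. rewrite frob_subr, frob_subl, frob_scalr, frob_scall, lyap_sym, (frob_sym K Y Z) by auto.
  auto. }
assert (N_zero : forall Z, - (0 * frob K Z Z) <= frob K Z (N Z) <= 0 * frob K Z Z).
{ intros Z. unfold N. rewrite frob_subr, frob_scalr. assert (H := lyap_numrange K A b b Z HA Hray). lra. }
assert (H := frob_L_norm_le K N N_add N_scal N_sym 0 N_zero X (Rle_refl 0)). rewrite !Rmult_0_l in H.
assert (Hz := frob_le0_entries K (N X) H r c Hr Hc).
unfold N, msub, mscal in Hz. change (lyap K A X r c) with (mmul K A X r c + mmul K X A r c) in Hz.
rewrite HX, (elem_rhs_far K) in Hz by auto. nra.
Qed.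

Lemma entry_bound K w A a b i j p X r c : (1 <= K)%nat -> (1 <= w)%nat -> symmetric K A ->
  (forall r k, (r < K)%nat -> (k < K)%nat -> A r k <> 0 -> (natdist r k <= w)%nat) ->
  rayleigh_bounded K A a b -> a <= b -> b < 0 ->
  (i < K)%nat -> (j < K)%nat -> solves_lyap K A X (elem_rhs i j p) -> (r < K)%nat -> (c < K)%nat ->
  Rabs (X r c) <= Rabs p * tau1 a b * rho1 K (2 * w) a b ^ natdist (phi K i j) (phi K r c).
Proof.
intros HK Hw HA Hband Hray Hab Hb Hi Hj HX Hr Hc.
assert (Hrho1 : 0 <= rho1 K (2 * w) a b).
{ unfold rho1. destruct (Req_EM_T _ 0); [lra|]. unfold Rpower. apply Rlt_le, exp_pos. }
assert (Htau : 0 <= Rabs p * tau1 a b).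
{ apply Rmult_le_pos; [apply Rabs_pos|]. eapply Rle_trans; [|apply tau1_ge_inv; lra].
  apply Rlt_le, Rinv_0_lt_compat. rewrite Rabs_left; lra. }
set (d := natdist (phi K i j) (phi K r c)).
destruct (Nat.eq_dec d 0) as [Hd0|Hd0].
- assert (Eq : phi K r c = phi K i j) by (unfold d, natdist in Hd0; lia).
  assert (r = i) by (rewrite <- (phi_mod K r c Hr), <- (phi_mod K i j Hi), Eq; auto).
  assert (c = j) by (rewrite <- (phi_div K r c Hr), <- (phi_div K i j Hi), Eq; auto).
  subst r c. rewrite Hd0, pow_O, Rmult_1_r.
  eapply Rle_trans; [apply (entry_bound_diag K A a b i j p X); auto|].
  apply Rmult_le_compat_l; [apply Rabs_pos|apply tau1_ge_inv; lra].
- destruct (Req_dec a b) as [<-|Hlt].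
  + rewrite (entry_off_center_scalar K A a i j p X r c) by (auto; lia).
    rewrite Rabs_R0. apply Rmult_le_pos; [|apply pow_le]; auto.
  + set (h := (K * w)%nat).
    assert (Hh : (1 <= h)%nat) by (unfold h; nia).
    set (n := ((d - 1) / h)%nat).
    assert (Hn1 : (h * n <= d - 1)%nat) by apply Nat.Div0.mul_div_le.
    assert (Hn2 : (d - 1 < h * S n)%nat).
    { assert (H := Nat.div_mod (d - 1) h ltac:(lia)). assert (H2 := Nat.mod_upper_bound (d - 1) h ltac:(lia)).
      unfold n. nia. }
    assert (Hab' : a < b) by lra.
    destruct (rho_base_bounds a b Hab' Hb) as [Hr0 Hr1].
    eapply Rle_trans.
    { apply (entry_bound_far K w A a b i j p X HK HA Hband Hray Hab' Hi Hj HX (rho_base a b) n r c);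
        auto; [apply center_rho_base; auto|]. unfold center_dist. fold d h. nia. }
    apply Rmult_le_compat; [| apply pow_le; lra | | apply rho_base_pow_le_rho1; auto; fold h; nia].
    * apply Rmult_le_pos; [apply Rabs_pos|]. apply Rlt_le, Rdiv_lt_0_compat; [lra|].
      apply Rmult_lt_0_compat; [lra|]. apply Rmult_lt_0_compat; nra.
    * apply Rmult_le_compat_l; [apply Rabs_pos|]. apply tau1_ge_cheb; auto.
Qed.

Lemma lyap_superposition K A a b P X : symmetric K A -> rayleigh_bounded K A a b -> b < 0 ->
  solves_lyap K A X P ->
  exists Xs : nat -> nat -> mat, (forall i j, solves_lyap K A (Xs i j) (elem_rhs i j (P i j))) /\
    forall r c, (r < K)%nat -> (c < K)%nat -> X r c = rsum K (fun i => rsum K (fun j => Xs i j r c)).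
Proof.
intros HA Hray Hb HX.
assert (Hex : forall i j, exists Y, solves_lyap K A Y (elem_rhs i j (P i j)))
  by (intros; apply (lyap_surjective K A a b); auto).
set (Xs := fun i j => proj1_sig (constructive_indefinite_description _ (Hex i j))).
assert (HXs : forall i j, solves_lyap K A (Xs i j) (elem_rhs i j (P i j))).
{ intros i j. unfold Xs. destruct (constructive_indefinite_description _ _); auto. }
exists Xs. split; auto.
set (Y := fun r c => rsum K (fun i => rsum K (fun j => Xs i j r c))).
assert (HY : forall r c, (r < K)%nat -> (c < K)%nat -> lyap K A Y r c = P r c).
{ intros r c Hr Hc. rewrite <- (rsum_elem_rhs K P r c Hr Hc). unfold Y.
  rewrite (lyap_rsum K A (fun i r c => rsum K (fun j => Xs i j r c))). apply rsum_ext; intros i _.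
  rewrite (lyap_rsum K A (fun j r c => Xs i j r c)). apply rsum_ext; intros j _. apply HXs; auto. }
assert (HXY := lyap_injective K A a b (msub X Y) HA Hray Hb).
intros r c Hr Hc. change (X r c = Y r c).
assert (msub X Y r c = 0); [|unfold msub in *; lra].
apply HXY; auto. intros r' c' Hr' Hc'.
rewrite (L_sub (lyap K A) (lyap_add K A) (lyap_scal K A)). unfold msub.
change (lyap K A X r' c') with (mmul K A X r' c' + mmul K X A r' c').
rewrite HX, HY by auto. ring.
Qed.

Theorem theorem1 (K m : nat) (A P : mat) (a b : R) :
  (1 <= K)%nat ->
  (0 < m)%nat -> Nat.Even m ->
  symmetric K A -> neg_definite K A -> banded K m A ->
  is_lambda_min K A a -> is_lambda_max K A b ->
  (forall i j, (i < K)%nat -> (j < K)%nat ->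
     forall Xij : mat, solves_lyap K A Xij (elem_rhs i j (P i j)) ->
     forall s, (s < K * K)%nat ->
       Rabs (vec_entry K Xij s)
         <= Rabs (P i j) * tau1 a b * rho1 K m a b ^ natdist (phi K i j) s)
  /\
  (forall X : mat, solves_lyap K A X P ->
     forall s, (s < K * K)%nat ->
       Rabs (vec_entry K X s)
         <= tau1 a b * rsum K (fun i => rsum K (fun j =>
              Rabs (P i j) * rho1 K m a b ^ natdist (phi K i j) s))).
Proof.
intros HK Hm [w ->] HA HN HB Hmin Hmax.
assert (Hb := lambda_max_neg K A b HN Hmax).
assert (Hab := lambda_min_le_max K A a b Hmin Hmax).
assert (Hray := rayleigh_bounded_extremal K A a b HK HA Hmin Hmax).
assert (Hband := banded_natdist K w A HB).
assert (Hent : forall i j, (i < K)%nat -> (j < K)%nat ->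
     forall Xij : mat, solves_lyap K A Xij (elem_rhs i j (P i j)) ->
     forall s, (s < K * K)%nat ->
       Rabs (vec_entry K Xij s) <= Rabs (P i j) * tau1 a b * rho1 K (2 * w) a b ^ natdist (phi K i j) s).
{ intros i j Hi Hj Xij HX s Hs.
  pose proof (entry_bound K w A a b i j (P i j) Xij (s mod K) (s / K)) as H.
  rewrite phi_mod_div in H by auto. apply H; auto; try lia; [apply mod_lt_sq|apply div_lt_sq]; auto. }
split; [exact Hent|].
intros X HX s Hs.
destruct (lyap_superposition K A a b P X HA Hray Hb HX) as [Xs [HXs HXsum]].
unfold vec_entry. rewrite HXsum by (apply mod_lt_sq || apply div_lt_sq; auto).
replace (tau1 a b * _) with (rsum K (fun i => rsum K (fun j =>
    Rabs (P i j) * tau1 a b * rho1 K (2 * w) a b ^ natdist (phi K i j) s))).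
- apply Rabs_rsum2_le; intros i j Hi Hj. apply (Hent i j Hi Hj (Xs i j) (HXs i j) s Hs).
- rewrite <- rsum_scal. apply rsum_ext; intros.
  rewrite <- rsum_scal. apply rsum_ext; intros. ring.
Qed.
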